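(* Let $1\le k\le n$, $h=\mathcal D_K(x^{\epsilon_k+\epsilon_{-k}})$, $e=\mathcal D_K(x^{2\epsilon_k+\epsilon_{-k}})$, $d^{(\ell)}=\frac1{\ell!}(\mathrm{ad}\,e)^\ell$. For $a\in\mathbb F$ put $F_a=\sum_{r\ge0}\frac1{r!}h_a^{\langle r\rangle}\otimes e^rt^r\in (U(\mathbf K)\otimes U(\mathbf K))[[t]]$ and $u_a=\sum_{r\ge0}\frac{(-1)^r}{r!}h_{-a}^{[r]}e^rt^r\in U(\mathbf K)[[t]]$. Then for every $\alpha\in\mathbb Z^{2n+1}$, $a\in\mathbb F$ and integer $s\ge1$: $$\big(\mathcal D_K(x^\alpha)^s\otimes1\big)F_a=F_{a+s(\alpha_{-k}-\alpha_k)}\big(\mathcal D_K(x^\alpha)^s\otimes1\big),$$ $$\mathcal D_K(x^\alpha)^s\,u_a=u_{a+s(\alpha_k-\alpha_{-k})}\sum_{\ell\ge0}d^{(\ell)}\big(\mathcal D_K(x^\alpha)^s\big)\,h_{1-a}^{\langle\ell\rangle}t^\ell,$$ $$\big(1\otimes\mathcal D_K(x^\alpha)^s\big)F_a=\sum_{\ell\ge0}(-1)^\ell F_{a+\ell}\big(h_a^{\langle\ell\rangle}\otimes d^{(\ell)}(\mathcal D_K(x^\alpha)^s)\big)t^\ell.$$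
   Context: Let $\mathbb F$ be a field of characteristic $0$ and $n\ge1$. Coordinates are indexed by $\{-n,\dots,-1,0,1,\dots,n\}$; $\epsilon_i\in\mathbb Z^{2n+1}$ is the $i$-th unit vector and, for $\alpha\in\mathbb Z^{2n+1}$, $x^\alpha=\prod_i x_i^{\alpha_i}$ in $\mathbb F[x_{-n}^{\pm1},\dots,x_n^{\pm1}]$. Define the derivation $\mathcal D_K(x^\alpha)=\big(2-\sum_{i=1}^n(\alpha_i+\alpha_{-i})\big)x^\alpha\frac{\partial}{\partial x_0}+\sum_{i=1}^n\Big[(\alpha_0x^{\alpha+\epsilon_i-\epsilon_0}+\alpha_{-i}x^{\alpha-\epsilon_{-i}})\frac{\partial}{\partial x_i}+(\alpha_0x^{\alpha+\epsilon_{-i}-\epsilon_0}-\alpha_ix^{\alpha-\epsilon_i})\frac{\partial}{\partial x_{-i}}\Big]$, extended linearly. The generalized Cartan type $K$ Lie algebra $\mathbf K$ is the Lie algebra of derivations (commutator bracket) with basis $\{\mathcal D_K(x^\alpha):\alpha\in\mathbb Z^{2n+1}\}$; explicitly $[\mathcal D_K(x^\alpha),\mathcal D_K(x^\beta)]=\mathcal D_K\Big(\big((2-\sum_{i=1}^n(\alpha_i+\alpha_{-i}))\beta_0-(2-\sum_{i=1}^n(\beta_i+\beta_{-i}))\alpha_0\big)x^{\alpha+\beta-\epsilon_0}+\sum_{i=1}^n(\alpha_{-i}\beta_i-\alpha_i\beta_{-i})x^{\alpha+\beta-\epsilon_i-\epsilon_{-i}}\Big)$. For an element $x$ of a unital algebra,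 a scalar $a$ and $m\ge0$: $x_a^{\langle m\rangle}=(x+a)(x+a+1)\cdots(x+a+m-1)$, $x_a^{[m]}=(x+a)(x+a-1)\cdots(x+a-m+1)$, $x^{\langle m\rangle}=x_0^{\langle m\rangle}$ (empty products $=1$). $\mathrm{ad}\,e(y)=ey-ye$. *)

From HB Require Import structures.
From mathcomp Require Import all_boot all_order all_algebra.
Set Implicit Arguments. Unset Strict Implicit. Unset Printing Implicit Defensive.
Import Order.TTheory GRing.Theory Num.Theory.
Local Open Scope ring_scope.

(* Coordinate indices {-n,...,-1,0,1,...,n}:
   None            <-> 0
   Some (i, true)  <-> i+1      (i : 'I_n)
   Some (i, false) <-> -(i+1)   *)
Definition idx (n : nat) := option ('I_n * bool).
Definition i0 {n : nat} : idx n := None.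
Definition ip {n : nat} (i : 'I_n) : idx n := Some (i, true).
Definition im {n : nat} (i : 'I_n) : idx n := Some (i, false).

Definition expo (n : nat) := {ffun idx n -> int}.
Definition eps {n : nat} (j : idx n) : expo n := [ffun l => ((l == j) : nat)%:Z].

Definition degK {n : nat} (al : expo n) : int :=
  2 - \sum_(i < n) (al (ip i) + al (im i)).

(* A linear map from K (basis D_K(x^alpha)) into an associative unital
   F-algebra R, given by its values f alpha on the basis, is a Lie algebra
   homomorphism iff it respects the bracket on basis elements. *)
Definition lie_hom {F : fieldType} {R : algType F} {n : nat}
    (f : expo n -> R) : Prop :=
  forall al be : expo n,
    f al * f be - f be * f al =
      ((degK al * be i0 - degK be * al i0)%:~R : F) *: f (al + be - eps i0)
    + \sum_(i < n) ((al (im i) * be (ip i) - al (ip i) * be (im i))%:~R : F)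
                   *: f (al + be - eps (ip i) - eps (im i)).

Definition rising {F : fieldType} {R : algType F} (x : R) (a : F) (m : nat) : R :=
  \prod_(j < m) (x + (a + j%:R)%:A).
Definition falling {F : fieldType} {R : algType F} (x : R) (a : F) (m : nat) : R :=
  \prod_(j < m) (x + (a - j%:R)%:A).

Definition ad {R : ringType} (e y : R) : R := e * y - y * e.
Definition dpow {F : fieldType} {R : algType F} (e : R) (l : nat) (y : R) : R :=
  ((l`!%:R : F)^-1) *: iter l (ad e) y.

(* Formal power series in a central variable t, as coefficient sequences. *)
Definition ser (R : Type) := nat -> R.
Definition serC {R : ringType} (c : R) : ser R := fun N => if N == 0%N then c else 0.
Definition sermul {R : ringType} (p q : ser R) : ser R :=
  fun N => \sum_(i < N.+1) p i * q (N - i)%N.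

(* F_a = sum_r (1/r!) h_a^<r> (x) e^r t^r, where x (x) y is realised as
   phi1 x * phi2 y; here h1 = phi1 h, e2 = phi2 e. *)
Definition Fser {F : fieldType} {R : algType F} (h1 e2 : R) (a : F) : ser R :=
  fun r => ((r`!%:R : F)^-1) *: (rising h1 a r * e2 ^+ r).
Definition user {F : fieldType} {R : algType F} (h e : R) (a : F) : ser R :=
  fun r => ((-1) ^+ r / (r`!%:R : F)) *: (falling h (- a) r * e ^+ r).

From HB Require Import structures.
From mathcomp Require Import all_boot all_order all_algebra ring.
Import Order.TTheory GRing.Theory Num.Theory.
Local Open Scope ring_scope.
Set Implicit Arguments. Unset Strict Implicit. Unset Printing Implicit Defensive.

(* Everything is governed by weights for ad h, where h = D_K(x^(e_k + e_-k)):
   the bracket gives [h, D_K(x^alpha)] = (alpha_k - alpha_-k) D_K(x^alpha), so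
   e has weight 1, X = D_K(x^alpha)^s has weight s (alpha_k - alpha_-k), and the
   second tensor factor commutes with h.  An element X of weight c moves past a
   polynomial in h as X p(h) = p(h - c) X, which shifts the parameters of the
   rising and falling factorials.  Moving X past e^r / r! is a Leibniz-type
   expansion X e^r / r! = sum_l (-1)^l (e^(r-l) / (r-l)!) d^(l)(X), after which
   the identities reduce to h_a^<l+m> = h_a^<l> h_(a+l)^<m> and
   h_a^<l> = h_(a+l-1)^[l]. *)

Section Adjoint.
Variable R : nzRingType.
Implicit Types (h e y z w : R).

Lemma adM h z w : ad h (z * w) = ad h z * w + z * ad h w.
Proof. by rewrite /ad mulrBl mulrBr !mulrA addrA subrK. Qed.

Lemma adB h z w : ad h (z - w) = ad h z - ad h w.
Proof. by rewrite /ad mulrBr mulrBl !opprB addrACA [RHS]addrACA [- (h * w) + _]addrC. Qed.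

Lemma mulr_swap_ad e z : z * e = e * z - ad e z.
Proof. by rewrite /ad opprB addrC subrK. Qed.

Lemma mulr_exp_ad e y N : y * e ^+ N =
  \sum_(l < N.+1) (-1) ^+ l * e ^+ (N - l) * iter l (ad e) y *+ 'C(N, l).
Proof.
elim: N => [|N IHN]; first by rewrite big_ord_recl big_ord0 !expr0 mulr1 !mul1r addr0.
set t := fun l => (-1) ^+ l * e ^+ (N.+1 - l) * iter l (ad e) y.
have step (l : 'I_N.+1) :
    (-1) ^+ l * e ^+ (N - l) * iter l (ad e) y * e = t l + t l.+1.
  have leN : (l <= N)%N := ltn_ord l.
  rewrite /t subSS (subSn leN) iterS exprSr exprS mulN1r !mulNr.
  set D := iter l (ad e) y; set s := (-1) ^+ l; set E := e ^+ (N - l).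
  by rewrite -!mulrA [D * e]mulr_swap_ad !mulrBr.
rewrite exprSr mulrA IHN mulr_suml.
under eq_bigr => l _ do rewrite mulrnAl step mulrnDl.
rewrite big_split /= [in RHS]big_ord_recl.
under [in RHS]eq_bigr => i _ do rewrite lift0 binS mulrnDr.
rewrite big_split /= [X in _ = _ + (X + _)]big_ord_recr /= (bin_small (ltnSn N)) mulr0n addr0.
by rewrite big_ord_recl !bin0 addrA.
Qed.
End Adjoint.

Section Factorials.
Variables (F : fieldType) (R : algType F).
Implicit Types (h : R) (a b : F).

Lemma commr_shift h b c : GRing.comm (h + b%:A) (h + c%:A).
Proof.
apply: commrD; last exact/commr_sym/comm_alg.
by apply/commr_sym/commrD; [apply: commr_refl | apply/commr_sym/comm_alg].
Qed.

Lemma commr_rising_shift h a b l : GRing.comm (rising h a l) (h + b%:A).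
Proof. by apply/commr_sym/commr_prod => j _; apply: commr_shift. Qed.

Lemma commr_rising h a b l m : GRing.comm (rising h a l) (rising h b m).
Proof. by apply: commr_prod => j _; apply: commr_rising_shift. Qed.

Lemma risingD h b l m : rising h b (l + m) = rising h b l * rising h (b + l%:R) m.
Proof.
elim: m => [|m IH]; first by rewrite addn0 /rising big_ord0 mulr1.
by rewrite addnS /rising !big_ord_recr /= -!/(rising _ _ _) IH mulrA natrD addrA.
Qed.

Lemma fallingD h b l m : falling h b (l + m) = falling h b l * falling h (b - l%:R) m.
Proof.
elim: m => [|m IH]; first by rewrite addn0 /falling big_ord0 mulr1.
by rewrite addnS /falling !big_ord_recr /= -!/(falling _ _ _) IH mulrA natrD opprD addrA.
Qed.

Lemma rising_falling h b l : rising h b l = falling h (b + l%:R - 1) l.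
Proof.
elim: l b => [|l IH] b; first by rewrite /rising /falling !big_ord0.
rewrite /rising big_ord_recr /= -/(rising h b l) IH.
rewrite /falling big_ord_recl /= -/(falling h _ l).
have -> : b + l.+1%:R - 1 = b + l%:R by rewrite -addn1 natrD addrA addrK.
rewrite subr0 (eq_bigr (fun i : 'I_l => h + (b + l%:R - 1 - i%:R)%:A)); last first.
  by move=> i _; rewrite /bump /= natrD opprD addrA.
by rewrite -[\prod_(i < l) _]/(falling h _ l) -IH commr_rising_shift.
Qed.
End Factorials.

Section Weights.
Variables (F : fieldType) (R : algType F).
Implicit Types (h e y z w : R) (b c d : F).

Definition ad_eigen h c z := ad h z = c *: z.

Lemma ad_eigenM h c d z w :
  ad_eigen h c z -> ad_eigen h d w -> ad_eigen h (c + d) (z * w).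
Proof.
by rewrite /ad_eigen adM => -> ->; rewrite -scalerAl -scalerAr scalerDl.
Qed.

Lemma ad_eigenB h c z w : ad_eigen h c z -> ad_eigen h c w -> ad_eigen h c (z - w).
Proof. by rewrite /ad_eigen adB scalerBr => -> ->. Qed.

Lemma comm_ad_eigen0 h z : GRing.comm h z -> ad_eigen h 0 z.
Proof. by rewrite /ad_eigen /ad scale0r => ->; rewrite subrr. Qed.

Lemma ad_eigenZ h c k z : ad_eigen h c z -> ad_eigen h c (k *: z).
Proof. by rewrite /ad_eigen /ad -scalerAr -scalerAl -scalerBr => ->; rewrite !scalerA mulrC. Qed.

Lemma ad_eigen_ad h c d e z :
  ad_eigen h d e -> ad_eigen h c z -> ad_eigen h (c + d) (ad e z).
Proof.
move=> He Hz; apply: ad_eigenB; last exact: ad_eigenM.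
by rewrite addrC; apply: ad_eigenM.
Qed.

Lemma ad_eigenX h c z s : ad_eigen h c z -> ad_eigen h (s%:R * c) (z ^+ s).
Proof.
move=> Hz; elim: s => [|s IH].
  by rewrite /ad_eigen /ad expr0 mulr1 mul1r subrr mul0r scale0r.
by rewrite exprSr -addn1 natrD mulrDl mul1r; apply: ad_eigenM.
Qed.

Lemma ad_eigen_iter h c d e z l : ad_eigen h d e -> ad_eigen h c z ->
  ad_eigen h (c + l%:R * d) (iter l (ad e) z).
Proof.
move=> He Hz; elim: l => [|l IH] /=; first by rewrite mul0r addr0.
by rewrite -addn1 natrD mulrDl mul1r addrA; apply: ad_eigen_ad.
Qed.

Lemma ad_eigen_mul_shift h c b z :
  ad_eigen h c z -> z * (h + b%:A) = (h + (b - c)%:A) * z.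
Proof.
rewrite /ad_eigen /ad => Hz.
rewrite mulrDr mulrDl mulr_algr mulr_algl scalerBl -Hz.
by rewrite opprB addrCA subrKC addrC.
Qed.

Lemma ad_eigen_mul_prod h c z r (f : nat -> F) : ad_eigen h c z ->
  z * \prod_(j < r) (h + (f j)%:A) = \prod_(j < r) (h + (f j - c)%:A) * z.
Proof.
move=> Hz; elim: r => [|r IH]; first by rewrite !big_ord0 mulr1 mul1r.
by rewrite !big_ord_recr /= mulrA IH -!mulrA (ad_eigen_mul_shift _ Hz).
Qed.

Lemma ad_eigen_mul_rising h c b z r :
  ad_eigen h c z -> z * rising h b r = rising h (b - c) r * z.
Proof.
move=> Hz; rewrite /rising (ad_eigen_mul_prod r (fun j => b + j%:R) Hz).
by congr (_ * _); apply: eq_bigr => j _; rewrite addrAC.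
Qed.

Lemma ad_eigen_mul_falling h c b z r :
  ad_eigen h c z -> z * falling h b r = falling h (b - c) r * z.
Proof.
move=> Hz; rewrite /falling (ad_eigen_mul_prod r (fun j => b - j%:R) Hz).
by congr (_ * _); apply: eq_bigr => j _; rewrite addrAC.
Qed.
End Weights.

Section Series.
Variable R : nzRingType.
Implicit Types (p q : ser R) (c : R).

Lemma sermulCl c p N : sermul (serC c) p N = c * p N.
Proof.
rewrite /sermul big_ord_recl /= subn0 big1 ?addr0 // => i _.
by rewrite /serC mul0r.
Qed.

Lemma sermulCr c p N : sermul p (serC c) N = p N * c.
Proof.
rewrite /sermul big_ord_recr /= subnn big1 ?add0r // => i _.
by rewrite /serC subn_eq0 leqNgt ltn_ord mulr0.
Qed.

Lemma sermul_rev p q N : sermul p q N = \sum_(l < N.+1) p (N - l)%N * q l.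
Proof.
rewrite /sermul (reindex_inj rev_ord_inj); apply: eq_bigr => l _ /=.
by rewrite subSS subKn // -ltnS.
Qed.
End Series.

Lemma mulr_signZ (F : fieldType) (R : algType F) n (x : R) :
  (-1) ^+ n * x = ((-1) ^+ n : F) *: x.
Proof. by rewrite -mulr_algl -(rmorph_sign (in_alg R)). Qed.

Section CharZero.
Variables (F : fieldType) (R : algType F).
Hypothesis charF0 : [pchar F] =i pred0.

Lemma pnatf_neq0 m : (0 < m)%N -> (m%:R : F) != 0.
Proof. by rewrite ((pcharf0P F).1 charF0) -lt0n. Qed.

Lemma mulr_divexp_ad (e y : R) N : y * ((N`!%:R : F)^-1 *: e ^+ N) =
  \sum_(l < N.+1) ((-1) ^+ l / (N - l)`!%:R) *: (e ^+ (N - l) * dpow e l y).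
Proof.
rewrite -scalerAr mulr_exp_ad scaler_sumr; apply: eq_bigr => l _.
rewrite -mulrA mulr_signZ /dpow -scalerAr scalerA -scaler_nat !scalerA.
congr (_ *: _).
have leN : (l <= N)%N := ltn_ord l.
have := bin_fact leN; move/(congr1 (fun m => m%:R : F)); rewrite !natrM => <-.
field.
by rewrite !pnatf_neq0 ?bin_gt0 ?fact_gt0.
Qed.
End CharZero.

Section Identities.
Variables (F : fieldType) (R : algType F).
Hypothesis charF0 : [pchar F] =i pred0.
Variables (h e X : R) (a c : F).

Lemma eigen_mul_Fser N : ad_eigen h c X -> GRing.comm X e ->
  X * Fser h e a N = Fser h e (a - c) N * X.
Proof.
move=> hX cXe; rewrite /Fser -scalerAr -scalerAl mulrA (ad_eigen_mul_rising _ _ hX).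
by rewrite -!mulrA (commrX N cXe).
Qed.

Lemma eigen_mul_user N : ad_eigen h 1 e -> ad_eigen h c X ->
  X * user h e a N
  = sermul (user h e (a + c)) (fun l => dpow e l X * rising h (1 - a) l) N.
Proof.
move=> he hX; rewrite /user -scalerA -!scalerAr mulrA (ad_eigen_mul_falling _ _ hX).
rewrite -mulrA (scalerAr _ (falling _ _ _)) (scalerAr _ X) mulr_divexp_ad //.
rewrite mulr_sumr scaler_sumr sermul_rev.
apply: eq_bigr => -[l ltlN] _ /=; have leN : (l <= N)%N := ltlN.
move: (N - l)%N (subnK leN) => j NE; clear ltlN leN; subst N.
have wZ : ad_eigen h (j%:R * 1 + (c + l%:R * 1)) (e ^+ j * dpow e l X).
  by apply: ad_eigenM; [apply: ad_eigenX | apply/ad_eigenZ/ad_eigen_iter].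
rewrite -scalerAl -mulrA (mulrA (e ^+ j)) (ad_eigen_mul_rising _ _ wZ).
rewrite -scalerAr scalerA exprD -mulrA signrMK; congr (_ *: _).
rewrite fallingD rising_falling opprD !mulrA; congr (_ * falling _ _ _ * _ * _).
by ring.
Qed.

Lemma eigen0_mul_Fser N : ad_eigen h 0 e -> ad_eigen h 0 X ->
  X * Fser h e a N
  = \sum_(l < N.+1) (-1) ^+ l
      * sermul (Fser h e (a + l%:R)) (serC (rising h a l * dpow e l X)) (N - l)%N.
Proof.
move=> he hX; rewrite /Fser -scalerAr mulrA (ad_eigen_mul_rising _ _ hX) subr0 -mulrA.
rewrite (scalerAr _ (rising _ _ _)) (scalerAr _ X) mulr_divexp_ad // mulr_sumr.
apply: eq_bigr => -[l ltlN] _ /=; have leN : (l <= N)%N := ltlN.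
move: (N - l)%N (subnK leN) => j NE; clear ltlN leN; subst N.
rewrite sermulCr mulr_signZ -scalerAr -scalerAl scalerA; congr (_ *: _).
have := ad_eigen_mul_rising a l (ad_eigenX j he); rewrite mulr0 subr0 => ejE.
by rewrite addnC risingD -!mulrA (mulrA (e ^+ j)) ejE !mulrA (commr_rising _ a).
Qed.
End Identities.

Section LieWeights.
Variables (F : fieldType) (R : algType F) (n : nat) (k : 'I_n).

Local Notation hexp := (eps (ip k) + eps (im k)).

Lemma eq_idx (i j : 'I_n) b c :
  (Some (i, b) == Some (j, c) :> idx n) = (i == j) && (b == c).
Proof. by []. Qed.

Lemma hexp_ip i : hexp (ip i) = ((i == k) : nat)%:Z.
Proof. by rewrite !ffunE /ip /im !eq_idx andbT andbF addr0. Qed.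

Lemma hexp_im i : hexp (im i) = ((i == k) : nat)%:Z.
Proof. by rewrite !ffunE /ip /im !eq_idx andbT andbF add0r. Qed.

Lemma degK_hexp : degK hexp = 0.
Proof.
rewrite /degK (bigD1 k) //= hexp_ip hexp_im eqxx big1 ?addr0 // => i ne.
by rewrite hexp_ip hexp_im (negbTE ne).
Qed.

Lemma lie_hom_ad_eigen (phi : expo n -> R) (be : expo n) : lie_hom phi ->
  ad_eigen (phi hexp) ((be (ip k))%:~R - (be (im k))%:~R) (phi be).
Proof.
move=> hom; rewrite /ad_eigen /ad hom degK_hexp (_ : hexp i0 = 0); last by rewrite !ffunE.
rewrite mul0r mulr0 subr0 scale0r add0r.
rewrite (bigD1 k) //= big1 ?addr0 => [|i ne]; last first.
  by rewrite hexp_ip hexp_im (negbTE ne) !mul0r subrr scale0r.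
rewrite hexp_ip hexp_im eqxx !mul1r intrB; congr (_ *: phi _).
by apply/ffunP => j; rewrite !ffunE; ring.
Qed.
End LieWeights.

Unset Implicit Arguments.
Theorem lemma3p3
  (F : fieldType) (charF0 : [pchar F] =i pred0)
  (n : nat) (k : 'I_n)   (* k : 'I_n stands for the index k+1 in {1..n} *)
  (R : algType F) (phi1 phi2 : expo n -> R)
  (hom1 : lie_hom phi1) (hom2 : lie_hom phi2)
  (comm12 : forall al be : expo n, phi1 al * phi2 be = phi2 be * phi1 al)
  (al : expo n) (a : F) (s : nat) (hs : (0 < s)%N) :
  let hexp := eps (ip k) + eps (im k) in
  let eexp := eps (ip k) + eps (ip k) + eps (im k) in
  let h1 := phi1 hexp in let e1 := phi1 eexp in let e2 := phi2 eexp in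
  let X1 := phi1 al ^+ s in let X2 := phi2 al ^+ s in
  (forall N : nat,
     sermul (serC X1) (Fser h1 e2 a) N
     = sermul (Fser h1 e2 (a + s%:R * ((al (im k))%:~R - (al (ip k))%:~R)))
              (serC X1) N)
  /\
  (forall N : nat,
     X1 * user h1 e1 a N
     = sermul (user h1 e1 (a + s%:R * ((al (ip k))%:~R - (al (im k))%:~R)))
              (fun l => dpow e1 l X1 * rising h1 (1 - a) l) N)
  /\
  (forall N : nat,
     X2 * Fser h1 e2 a N
     = \sum_(l < N.+1)
         (-1) ^+ l * sermul (Fser h1 e2 (a + l%:R))
                            (serC (rising h1 a l * dpow e2 l X2)) (N - l)%N).
Proof.
move=> hexp eexp h1 e1 e2 X1 X2.
have wX1 := ad_eigenX s (lie_hom_ad_eigen k al hom1).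
have we1 : ad_eigen h1 1 e1.
  have := lie_hom_ad_eigen k eexp hom1; rewrite !ffunE /ip /im !eq_idx eqxx /=.
  by rewrite [X in ad_eigen _ X](_ : _ = 1) // -intrB.
have we2 : ad_eigen h1 0 e2 by apply: comm_ad_eigen0; rewrite /GRing.comm comm12.
have wX2 : ad_eigen h1 0 X2.
  by apply/comm_ad_eigen0/commrX; rewrite /GRing.comm comm12.
have cX1e2 : GRing.comm X1 e2.
  by apply/commr_sym/commrX/commr_sym; rewrite /GRing.comm comm12.
split; [|split] => N.
- rewrite sermulCl sermulCr (eigen_mul_Fser _ _ wX1 cX1e2).
  by congr (Fser _ _ _ _ * _); ring.
- exact: eigen_mul_user.
- exact: eigen0_mul_Fser.
Qed.
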